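(* Let $A$ be an abelian group of order $n$ whose $2$-Sylow subgroup is either non-cyclic or trivial. Then (a) $P_a\in\operatorname{SL}_n$ for every $a\in A$, and (b) $D_\chi\in\operatorname{SL}_n$ for every $\chi\in A^{\ast}$.
   Context: $k$ is an algebraically closed field of characteristic $0$, $A^{\ast}=\operatorname{Hom}(A,k^{\times})$ is the character group of $A$, and $V=k[A]$ is the group algebra of $A$, identified with $k^n$ via the basis $\{a : a\in A\}$, so $\operatorname{GL}(V)=\operatorname{GL}_n$. For $a\in A$, $P_a\in\operatorname{GL}(V)$ is defined by $P_a(\sum_{b\in A}c_b b)=\sum_{b\in A}c_b\, ab$; for $\chi\in A^{\ast}$, $D_\chi\in\operatorname{GL}(V)$ is defined by $D_\chi(\sum_{a\in A}c_a a)=\sum_{a\in A}c_a\chi(a)\,a$ ($c_a,c_b\in k$). *)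

From HB Require Import structures.
From mathcomp Require Import all_boot all_order all_algebra all_fingroup all_solvable.
Set Implicit Arguments. Unset Strict Implicit. Unset Printing Implicit Defensive.
Import GRing.Theory.
Local Open Scope ring_scope.

(* The finite abelian group A is the whole carrier of gT; V = k[A] = k^n with
   n = #|gT|, basis vectors indexed by 'I_n via enum_val (basis e_i <-> enum_val i). *)

Definition is_character (k : fieldType) (gT : finGroupType) (chi : gT -> k) : Prop :=
  (forall x, chi x != 0) /\ (forall x y, chi (x * y)%g = chi x * chi y).

(* P_a : sum c_b b |-> sum c_b (a b); column j (basis vector b = enum_val j)
   is the basis vector a*b. *)
Definition Pmx (k : fieldType) (gT : finGroupType) (a : gT) : 'M[k]_#|gT| :=
  \matrix_(i, j) ((enum_val i == (a * enum_val j)%g)%:R).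

Definition Dmx (k : fieldType) (gT : finGroupType) (chi : gT -> k) : 'M[k]_#|gT| :=
  \matrix_(i, j) ((i == j)%:R * chi (enum_val j)).

Definition inSL (k : fieldType) (n : nat) (M : 'M[k]_n) : Prop := \det M = 1.

From HB Require Import structures.
From mathcomp Require Import all_boot all_order all_algebra all_fingroup all_solvable.
Set Implicit Arguments. Unset Strict Implicit. Unset Printing Implicit Defensive.
Import GRing.Theory.

(* (a) Left translation by a permutes A freely, so its cycles all have length
   m = #[a] and there are n/m of them; its sign is -1 only if m is even and n/m
   odd, and then the 2-part of <[a]> is a nontrivial cyclic Sylow 2-subgroup.
   (b) det D_chi is the product p of all values of chi.  Pairing x with x^-1
   gives p^2 = 1, and a product over H \x K equals p_H^|K| p_K^|H|.  Hence the
   odd part of A can be discarded, and a noncyclic abelian 2-group is the direct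
   product of two subgroups of even order, on which p = 1. *)

Local Open Scope group_scope.

Section UniformCycleType.
Variables (T : finType) (s : {perm T}) (m : nat).
Hypothesis card_porbit_s : forall x, #|porbit s x| = m.

Lemma card_porbits_uniform : (#|porbits s| * m)%N = #|T|.
Proof.
have -> : porbits s = orbit 'P <[s]> @: [set: T].
  by apply/setP => X; rewrite /porbits porbitE; apply/imsetP/imsetP => -[x _ ->]; exists x.
rewrite -cardsT; symmetry; apply: card_uniform_partition.
  by move=> _ /imsetP[x _ ->]; rewrite -porbitE.
by apply: orbit_partition; apply/actsP => u _ x; rewrite !inE.
Qed.

Lemma odd_perm_uniform : odd_perm s = odd #|porbits s| && ~~ odd m.
Proof.
by rewrite /odd_perm -card_porbits_uniform oddM; case: (odd _); case: (odd m).
Qed.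

End UniformCycleType.

Lemma card_porbit_free (T : finType) (s : {perm T}) x :
  {in <[s]>, forall g : {perm T}, g x = x -> g = 1} -> #|porbit s x| = #[s].
Proof.
move=> free_s; rewrite porbit.unlock card_in_imset // => g h sg sh /= gh.
apply/eqP; rewrite eq_mulgV1; apply/eqP/free_s; first by rewrite groupM ?groupV.
by rewrite permM -[g x]/(aperm x g) gh permK.
Qed.

Lemma pcore_cycle_Sylow (gT : finGroupType) (p : nat) (G : {group gT}) a :
  a \in G -> p^'.-nat #|G : <[a]>| -> p.-Sylow(G) 'O_p(<[a]>).
Proof.
move=> Ga p'_index; have sAG : <[a]> \subset G by rewrite cycle_subG.
have hallA := nilpotent_pcore_Hall p (abelian_nil (cycle_abelian a)).
rewrite pHallE (subset_trans (pcore_sub _ _) sAG) (card_Hall hallA) -(Lagrange sAG).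
by rewrite partnM ?cardG_gt0 // (part_p'nat p'_index) muln1 eqxx.
Qed.

Section LeftTranslation.
Variable gT : finGroupType.
Implicit Types a : gT.

Definition lmul_rank a (j : 'I_#|gT|) := enum_rank (a * enum_val j).

Lemma lmul_rank_inj a : injective (lmul_rank a).
Proof. by move=> i j /enum_rank_inj /mulgI /enum_val_inj. Qed.

Definition lmul_perm a : {perm 'I_#|gT|} := perm (@lmul_rank_inj a).

Lemma lmul_permX a i j : (lmul_perm a ^+ i) j = enum_rank (a ^+ i * enum_val j).
Proof.
elim: i j => [|i IHi] j; first by rewrite expg0 perm1 mul1g enum_valK.
by rewrite expgS permM IHi permE /lmul_rank enum_rankK expgSr mulgA.
Qed.

Lemma lmul_permX_fix a i j : ((lmul_perm a ^+ i) j == j) = (a ^+ i == 1).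
Proof.
rewrite lmul_permX -(inj_eq enum_val_inj) enum_rankK.
by rewrite -{2}[enum_val j]mul1g (inj_eq (mulIg _)).
Qed.

Lemma lmul_permX_eq1 a i : (lmul_perm a ^+ i == 1) = (a ^+ i == 1).
Proof.
apply/eqP/idP => [s_i | /eqP a_i]; last first.
  by apply/permP => j; rewrite lmul_permX a_i mul1g enum_valK perm1.
by rewrite -(lmul_permX_fix a i (enum_rank 1)) s_i perm1.
Qed.

Lemma order_lmul_perm a : #[lmul_perm a] = #[a].
Proof.
apply/eqP; rewrite eqn_dvd !order_dvdn lmul_permX_eq1 expg_order.
by rewrite -lmul_permX_eq1 expg_order !eqxx.
Qed.

Lemma card_porbit_lmul_perm a j : #|porbit (lmul_perm a) j| = #[a].
Proof.
rewrite -order_lmul_perm card_porbit_free // => _ /cycleP[i ->] /eqP.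
by rewrite lmul_permX_fix -lmul_permX_eq1 => /eqP.
Qed.

Lemma odd_lmul_perm_Sylow a : odd_perm (lmul_perm a) ->
  exists2 S : {group gT}, S \in 'Syl_2([set: gT]) & cyclic S && (S :!=: 1).
Proof.
have card_orbits := card_porbits_uniform (card_porbit_lmul_perm a).
rewrite (odd_perm_uniform (card_porbit_lmul_perm a)) => /andP[odd_orbits even_a].
have index_a : #|[set: gT] : <[a]>| = #|porbits (lmul_perm a)|.
  apply/eqP; rewrite -(eqn_pmul2l (order_gt0 a)) orderE (Lagrange (subsetT _)) cardsT.
  by rewrite mulnC -orderE card_orbits card_ord.
have hallA := nilpotent_pcore_Hall 2 (abelian_nil (cycle_abelian a)).
exists 'O_2(<[a]>)%G.
  by rewrite inE pcore_cycle_Sylow ?inE // index_a p'natE // dvdn2 negbK.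
rewrite (cyclicS (pcore_sub _ _) (cycle_cyclic a)) trivg_card1 (card_Hall hallA).
by rewrite partn_eq1 ?cardG_gt0 // p'natE // dvdn2 negbK -orderE.
Qed.

End LeftTranslation.

Lemma even_card_2group (gT : finGroupType) (S : {group gT}) :
  2.-group S -> S :!=: 1 -> ~~ odd #|S|.
Proof. by move=> pS ntS; have [_ ] := pgroup_pdiv pS ntS; rewrite dvdn2. Qed.

Local Open Scope ring_scope.

Lemma det_Pmx (k : fieldType) (gT : finGroupType) (a : gT) :
  \det (Pmx k a) = (-1) ^+ lmul_perm a.
Proof.
have -> : Pmx k a = (perm_mx (lmul_perm a))^T.
  apply/matrixP => i j; rewrite !mxE permE /lmul_rank.
  by rewrite -(inj_eq enum_val_inj) enum_rankK eq_sym.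
by rewrite det_tr det_perm.
Qed.

Lemma det_Dmx (k : fieldType) (gT : finGroupType) (chi : gT -> k) :
  \det (Dmx chi) = \prod_x chi x.
Proof.
have -> : Dmx chi = diag_mx (\row_j chi (enum_val j)).
  by apply/matrixP => i j; rewrite !mxE; case: eqP => [->|_]; rewrite ?mul1r ?mul0r.
by rewrite det_diag [RHS]big_enum_val; apply: eq_bigr => i _; rewrite mxE.
Qed.

Section CharacterProducts.
Variables (k : fieldType) (gT : finGroupType) (chi : gT -> k).
Hypothesis chi_char : is_character chi.
Local Notation Pi A := (\prod_(x in A) chi x).

Lemma char_neq0 x : chi x != 0. Proof. by case: chi_char. Qed.

Lemma charM x y : chi (x * y)%g = chi x * chi y. Proof. by case: chi_char. Qed.

Lemma char1 : chi 1%g = 1.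
Proof. by apply: (mulfI (char_neq0 1%g)); rewrite -charM !mulg1 mulr1. Qed.

Lemma charV x : chi x^-1%g = (chi x)^-1.
Proof. by apply: (mulfI (char_neq0 x)); rewrite -charM mulgV char1 divff ?char_neq0. Qed.

Lemma charX x n : chi (x ^+ n)%g = chi x ^+ n.
Proof. by elim: n => [|n IHn]; rewrite ?char1 // expgS exprS charM IHn. Qed.

Lemma prod_char_sqr (H : {group gT}) : Pi H ^+ 2 = 1.
Proof.
have PiV : Pi H = (Pi H)^-1.
  rewrite -prodfV (reindex_inj invg_inj) /=.
  by apply: eq_big => [x | x _]; rewrite ?groupV ?charV.
by rewrite expr2 {1}PiV mulVf //; apply/prodf_neq0 => x _; apply: char_neq0.
Qed.

Lemma prod_char_expr_even (H : {group gT}) n : ~~ odd n -> Pi H ^+ n = 1.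
Proof.
move=> /negbTE even_n.
by rewrite -(odd_double_half n) even_n -mul2n exprM prod_char_sqr expr1n.
Qed.

Lemma prod_char_expr_odd (H : {group gT}) n : odd n -> Pi H ^+ n = Pi H.
Proof.
move=> odd_n; rewrite -(odd_double_half n) odd_n addnC exprD.
by rewrite prod_char_expr_even ?odd_double // mul1r expr1.
Qed.

Lemma prod_char_odd (H : {group gT}) : odd #|H| -> Pi H = 1.
Proof.
move=> odd_H; rewrite -(prod_char_expr_odd H odd_H) -prodrXl.
by apply: big1 => x Hx; rewrite -charX expg_cardG ?char1.
Qed.

Lemma prod_char_dprod (H K G : {group gT}) :
  H \x K = G -> Pi G = Pi H ^+ #|K| * Pi K ^+ #|H|.
Proof.
move=> defG; have /misomP[fM /isomP[/injmP inj_mulgm _]] : misom (setX H K) G mulgm.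
  exact/mulgmP.
have [_ {}defG _ _] := dprodP defG.
rewrite -defG -imset_mulgm big_imset //=.
rewrite (eq_bigl (fun p => (p.1 \in H) && (p.2 \in K))) => [|[h y]]; last by rewrite inE.
rewrite (eq_bigr (fun p => chi (p.1 * p.2)%g)) => [|[] //].
rewrite -(pair_big (fun h => h \in H) (fun y => y \in K) (fun h y => chi (h * y)%g)) /=.
under eq_bigr => h _ do rewrite (eq_bigr _ (fun y _ => charM h y)) prodrMl.
by rewrite prodrMr prodrXl.
Qed.

Lemma prod_char_dprod_even (H K G : {group gT}) :
  H \x K = G -> ~~ odd #|H| -> ~~ odd #|K| -> Pi G = 1.
Proof.
by move=> defG even_H even_K; rewrite (prod_char_dprod defG) !prod_char_expr_even ?mulr1.
Qed.

Lemma prod_char_noncyclic_2group (S : {group gT}) :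
  abelian S -> 2.-group S -> ~~ cyclic S -> Pi S = 1.
Proof.
move=> cSS pS ncS; have [x Sx expS] := exponent_witness (abelian_nil cSS).
have /splitsP[D /complP[tiXD defS]] := abelian_splits Sx (esym expS) cSS.
have sXS : <[x]> \subset S by rewrite cycle_subG.
have sDS : D \subset S by rewrite -defS mulG_subr.
have defS' : <[x]> \x D = S by rewrite dprodE // (sub_abelian_cent2 cSS).
apply: (prod_char_dprod_even defS'); apply: even_card_2group.
- exact: pgroupS sXS pS.
- apply: contra ncS => /eqP X1; apply/cyclicP; exists 1%g.
  by apply/eqP; rewrite cycle1 trivg_exponent expS orderE X1 cards1.
- exact: pgroupS sDS pS.
- by apply: contra ncS => /eqP D1; rewrite -defS D1 mulg1 cycle_cyclic.
Qed.

Lemma prod_char_pcore2 (G : {group gT}) : nilpotent G -> Pi G = Pi 'O_2(G).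
Proof.
move=> nilG; rewrite (prod_char_dprod (nilpotent_pcoreC 2%N nilG)).
have odd_K : odd #|'O_(2%N)^'(G)|.
  by have := pcore_pgroup 2%N^' G; rewrite /pgroup p'natE // dvdn2 negbK.
by rewrite (prod_char_odd odd_K) expr1n mulr1 prod_char_expr_odd.
Qed.

Lemma prod_char_eq1 (G : {group gT}) : abelian G ->
  (forall S : {group gT}, S \in 'Syl_2(G) -> ~~ cyclic S \/ S = 1%G) -> Pi G = 1.
Proof.
move=> cGG Syl2G; have nilG := abelian_nil cGG.
rewrite prod_char_pcore2 //.
have : 'O_2(G)%G \in 'Syl_2(G) by rewrite inE nilpotent_pcore_Hall.
case/Syl2G => [ncS | /(congr1 val) /= ->]; last by rewrite big_set1 char1.
apply: prod_char_noncyclic_2group ncS; last exact: pcore_pgroup.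
exact: abelianS (pcore_sub _ _) cGG.
Qed.

End CharacterProducts.

Theorem lemma8p9 (k : closedFieldType) (gT : finGroupType) :
  [pchar k] =i pred0 ->
  abelian [set: gT] ->
  (forall S : {group gT}, (S \in 'Syl_2([set: gT]))%g ->
     ~~ cyclic S \/ S = 1%G) ->
  (forall a : gT, inSL (Pmx k a)) /\
  (forall chi : gT -> k, is_character chi -> inSL (Dmx chi)).
Proof.
move=> _ cGG Syl2G; split => [a | chi chi_char]; rewrite /inSL.
  rewrite det_Pmx; case: (boolP (odd_perm _)) => [/odd_lmul_perm_Sylow | _] //.
  by case=> S /Syl2G[/negbTE-> | ->]; rewrite ?eqxx ?andbF.
rewrite det_Dmx -[RHS](prod_char_eq1 chi_char cGG Syl2G).
by apply: eq_bigl => x; rewrite inE.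
Qed.
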